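(* Let $q$ be a power of the prime $p$, $n\ge 2$ and $1\le i\le n$. If $\alpha$ is a root of $s_{n,i}(t)$ in an algebraic closure of $\mathbb{F}_q$ whose multiplicity $m$ satisfies $\gcd(m,p)=1$, then $\alpha\in\mathbb{F}_{q^n}$.
   Context: For a prime power $q$ and integers $n\ge 1$, $0\le i\le n$, the $i$-th $(n,q)$-elementary symmetric polynomial is $s_{n,i}(t)=\sum_{0\le j_1<j_2<\dots<j_i\le n-1} t^{q^{j_1}+q^{j_2}+\dots+q^{j_i}}\in\mathbb{F}_p[t]$ (where $p$ is the characteristic of $\mathbb{F}_q$). By convention $s_{n,0}(t)=1$. *)

From mathcomp Require Import all_boot all_order all_algebra.
Set Implicit Arguments. Unset Strict Implicit. Unset Printing Implicit Defensive.
Import GRing.Theory.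
Local Open Scope ring_scope.

(* The i-th (n,q)-elementary symmetric polynomial
   s_{n,i}(t) = sum_{0 <= j_1 < ... < j_i <= n-1} t^(q^j_1 + ... + q^j_i),
   with coefficients in an arbitrary ring R (all coefficients are the
   integer 1, so this is the image of the F_p-polynomial in any ring of
   characteristic p). *)
Definition s_nqi (R : nzSemiRingType) (n q i : nat) : {poly R} :=
  \sum_(S : {set 'I_n} | #|S| == i) 'X^(\sum_(j in S) q ^ (val j))%N.

From mathcomp Require Import all_boot all_order all_algebra.
From mathcomp Require Import zify ring.
Set Implicit Arguments. Unset Strict Implicit. Unset Printing Implicit Defensive.
Import GRing.Theory.
Local Open Scope ring_scope.

(* Put e(S) = sum_(j in S) q^j for S a subset of Z/n.  Raising s_{n,i} to the
   q-th power multiplies every exponent by q, which is e of the rotated set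
   S + 1, except that a wrapped-around index n-1 contributes q^n instead of 1.
   Since e(S) = [0 \in S] mod p, the derivative s' only keeps the monomials
   with 0 \in S, and the two facts combine into
     s^q - s = (X^(q^n) - X) s'.
   At a root a of s of multiplicity m, s^q - s = s (s^(q-1) - 1) vanishes to
   order exactly m while s' vanishes to order exactly m - 1 when p does not
   divide m; hence a is a root of X^(q^n) - X. *)

Definition qsum {n : nat} (q : nat) (S : {set 'I_n}) : nat := (\sum_(j in S) q ^ val j)%N.

Lemma ordS_val n (j : 'I_n.+1) : j != ord_max -> val (ordS j) = j.+1.
Proof.
move=> /eqP jn; rewrite /= modn_small // ltnS ltn_neqAle -ltnS ltn_ord andbT.
by apply: contra_not_neq jn => jE; apply: val_inj.
Qed.

Lemma ord0_in_ordS n (S : {set 'I_n.+1}) : (ord0 \in @ordS _ @: S) = (ord_max \in S).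
Proof.
have -> : (ord0 : 'I_n.+1) = ordS ord_max by apply: val_inj; rewrite /= modnn.
by rewrite mem_imset //; apply: ordS_inj.
Qed.

(* The wrap-around correction, written without truncated subtraction. *)
Lemma qsum_ordS n q (S : {set 'I_n.+1}) :
  (q * qsum q S + (ord_max \in S) =
   qsum q (@ordS _ @: S) + (ord_max \in S) * q ^ n.+1)%N.
Proof.
rewrite /qsum big_imset; last by move=> x y _ _; apply: ordS_inj.
rewrite big_distrr /=.
have shift (j : 'I_n.+1) : j != ord_max -> (q * q ^ j = q ^ (j.+1 %% n.+1))%N.
  by move=> jn; rewrite -[(_ %% _)%N]/(val (ordS j)) ordS_val // expnS.
case: (boolP (ord_max \in S)) => Sn; last first.
  rewrite /= !addn0; apply: eq_bigr => j jS; apply: shift.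
  by apply: contraNneq Sn => <-.
rewrite (bigD1 ord_max Sn) [in RHS](bigD1 ord_max Sn) /= modnn -expnS expn0.
rewrite (eq_bigr (fun j : 'I_n.+1 => q ^ (j.+1 %% n.+1))%N); last first.
  by move=> j /andP[_]; apply: shift.
by set X := (\sum_(i in S | _) _)%N; lia.
Qed.

Lemma qsum_gt0 n q (S : {set 'I_n.+1}) : ord0 \in S -> (0 < qsum q S)%N.
Proof. by move=> S0; rewrite /qsum (bigD1 ord0) //= expn0 addn_gt0. Qed.

Lemma natr_qsum (R : nzSemiRingType) n q (S : {set 'I_n.+1}) :
  q%:R = 0 :> R -> (qsum q S)%:R = (ord0 \in S)%:R :> R.
Proof.
move=> q0; have qX0 (j : 'I_n.+1) : j != ord0 -> (q ^ j)%:R = 0 :> R.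
  by rewrite natrX q0 expr0n; case: j => -[].
rewrite natr_sum; case: (boolP (ord0 \in S)) => S0.
  by rewrite (bigD1 ord0) //= big1 ?addr0 // => j /andP[_]; apply: qX0.
by rewrite big1 // => j jS; apply: qX0; apply: contraNneq S0 => <-.
Qed.

Lemma sumr_exp_pchar (R : comNzRingType) (I : Type) (r : seq I) (P : pred I)
    (F : I -> R) q :
  [pchar R].-nat q -> (\sum_(x <- r | P x) F x) ^+ q = \sum_(x <- r | P x) F x ^+ q.
Proof.
move=> q_pnat; apply: (big_morph _ (fun x y => exprDn_pchar x y q_pnat)).
by rewrite expr0n gtn_eqF //; case/andP: q_pnat.
Qed.

Section FrobeniusIdentity.

Variables (R : comNzRingType) (q : nat).
Hypotheses (q_pnat : [pchar R].-nat q) (q_eq0 : q%:R = 0 :> R).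

Lemma deriv_s_nqi n i :
  (s_nqi R n.+1 q i)^`() =
  \sum_(S : {set 'I_n.+1} | #|S| == i) (ord0 \in S)%:R *: 'X^((qsum q S).-1).
Proof.
rewrite /s_nqi raddf_sum; apply: eq_bigr => S _.
by rewrite /= derivXn -scaler_nat natr_qsum.
Qed.

Lemma expX_qsum_ordS n (S : {set 'I_n.+1}) :
  'X^(qsum q S) ^+ q - 'X^(qsum q (@ordS _ @: S)) =
  ('X^(q ^ n.+1) - 'X) *
    ((ord0 \in @ordS _ @: S)%:R *: 'X^((qsum q (@ordS _ @: S)).-1)) :> {poly R}.
Proof.
have := qsum_ordS q S; set T := @ordS _ @: S.
have T0 : (ord0 \in T) = (ord_max \in S) by apply: ord0_in_ordS.
rewrite -exprM mulnC T0; case Sn: (ord_max \in S) => /= E; last first.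
  by rewrite !addn0 in E; rewrite E scale0r mulr0 subrr.
have T_gt0 : (0 < qsum q T)%N by apply: qsum_gt0; rewrite T0.
rewrite scale1r mulrBl -exprD -exprS prednK //.
by congr (_ - _); congr 'X^_; lia.
Qed.

Lemma s_nqi_frobenius n i (s := s_nqi R n.+1 q i) :
  s ^+ q - s = ('X^(q ^ n.+1) - 'X) * s^`().
Proof.
have reindex (F : {set 'I_n.+1} -> {poly R}) :
    \sum_(T : {set 'I_n.+1} | #|T| == i) F T =
    \sum_(S : {set 'I_n.+1} | #|S| == i) F (@ordS _ @: S).
  rewrite (reindex_inj (imset_inj (@ordS_inj n.+1))); apply: eq_bigl => S.
  by rewrite card_imset //; apply: ordS_inj.
have poly_pnat : [pchar {poly R}].-nat q by rewrite (eq_pnat _ (pchar_poly R)).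
rewrite deriv_s_nqi /s /s_nqi sumr_exp_pchar // mulr_sumr.
rewrite [X in _ - X]reindex [RHS]reindex -sumrB.
by apply: eq_bigr => S _; apply: expX_qsum_ordS.
Qed.

End FrobeniusIdentity.

Lemma root_of_mul_deriv (F : fieldType) (s u Y : {poly F}) (a : F) :
  s != 0 -> root s a -> (mup a s)%:R != 0 :> F -> s * u = Y * s^`() -> root Y a.
Proof.
move=> s_neq0 s_a; have [m [g]] := multiplicity_XsubC s a.
rewrite s_neq0 /= => g_a sE; set D := 'X - a%:P in sE.
have -> : mup a s = m by rewrite sE mupMr // mup_XsubCX eqxx.
case: m sE => [|m] sE; first by rewrite sE mulr1 (negbTE g_a) in s_a.
move=> m_neq0; rewrite sE derivM deriv_exp derivXsubC mul1r exprS => E.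
have Dm_neq0 : D ^+ m != 0 by rewrite expf_neq0 // polyXsubC_eq0.
have {}E : (g * D * u) * D ^+ m = (Y * (g^`() * D + g *+ m.+1)) * D ^+ m.
  by transitivity (g * (D * D ^+ m) * u); [ring | rewrite E; ring].
move/(mulIf Dm_neq0)/(congr1 (horner^~ a))/esym/eqP: E.
rewrite /D !hornerE hornerMn subrr !mulr0 !mul0r add0r -mulr_natr.
by rewrite !mulf_eq0 (negbTE m_neq0) -!rootE (negbTE g_a) !orbF.
Qed.

Lemma mup_poly0 (F : fieldType) (a : F) : mup a 0 = 0%N.
Proof. by rewrite /mup; case: arg_maxnP => // -[[|j] //]; rewrite size_poly0. Qed.

Theorem lemma3p8 (p k : nat) (L : closedFieldType) (n i : nat) (alpha : L) :
  prime p -> (0 < k)%N -> p \in [pchar L] ->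
  (2 <= n)%N -> (1 <= i <= n)%N ->
  root (s_nqi L n (p ^ k) i) alpha ->
  coprime (mup alpha (s_nqi L n (p ^ k) i)) p ->
  alpha ^+ ((p ^ k) ^ n) = alpha.
Proof.
move=> p_pr k_gt0 pL; case: n => // n _ _.
set q := (p ^ k)%N; set s := s_nqi L n.+1 q i => s_a m_coprime.
have s_neq0 : s != 0.
  apply: contraTneq m_coprime => ->.
  by rewrite mup_poly0 /coprime gcd0n eqn_leq leqNgt prime_gt1.
have q_pnat : [pchar L].-nat q by rewrite pnatX (pnatE _ p_pr) pL.
have q_eq0 : q%:R = 0 :> L by rewrite natrX (pcharf0 pL) expr0n gtn_eqF.
have q_gt0 : (0 < q)%N by case/andP: q_pnat.
have : root ('X^(q ^ n.+1) - 'X) alpha.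
  apply: (root_of_mul_deriv (u := s ^+ q.-1 - 1) s_neq0 s_a).
    by rewrite -(dvdn_pcharf pL) -prime_coprime // coprime_sym.
  by rewrite mulrBr mulr1 -exprS prednK //; apply: s_nqi_frobenius.
by rewrite rootE !hornerE subr_eq0 => /eqP.
Qed.
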